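(* Let $(A,\cdot,\alpha_A)$ and $(B,\circ,\alpha_B)$ be nearly Hom-associative algebras over a field $\mathbb{K}$ of characteristic $0$. Suppose there are linear maps $l_A,r_A:A\to\mathrm{End}(B)$ and $l_B,r_B:B\to\mathrm{End}(A)$ such that $(l_A,r_A,B,\alpha_B)$ is a bimodule of $(A,\cdot,\alpha_A)$, $(l_B,r_B,A,\alpha_A)$ is a bimodule of $(B,\circ,\alpha_B)$, and for all $x,y\in A$, $a,b\in B$: \begin{align*} &\alpha_A(x)\cdot(r_B(a)y)+r_B(l_A(y)a)\alpha_A(x)-(l_B(a)x)\cdot\alpha_A(y)-l_B(r_A(x)a)\alpha_A(y)=0,\\ &\alpha_A(x)\cdot(l_B(a)y)+r_B(r_A(y)a)\alpha_A(x)-r_B(\alpha_B(a))(y\cdot x)=0,\\ &l_B(\alpha_B(a))(x\cdot y)-(r_B(a)y)\cdot\alpha_A(x)-l_B(l_A(y)a)\alpha_A(x)=0,\\ &\alpha_B(a)\circ(r_A(x)b)+r_A(l_B(b)x)\alpha_B(a)-(l_A(x)a)\circ\alpha_B(b)-l_A(r_B(a)x)\alpha_B(b)=0,\\ &\alpha_B(a)\circ(l_A(x)b)+r_A(r_B(b)x)\alpha_B(a)-r_A(\alpha_A(x))(b\circ a)=0,\\ &l_A(\alpha_A(x))(b\circ a)-(r_A(x)a)\circ\alpha_B(b)-l_A(l_B(a)x)\alpha_B(b)=0. \end{align*} Then, with the product $(x+a)\ast(y+b)=(x\cdot y+l_B(a)y+r_B(b)x)+(a\circ b+l_A(x)b+r_A(y)a)$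 on $A\oplus B$, the triple $(A\oplus B,\ast,\alpha_A\oplus\alpha_B)$ is a nearly Hom-associative algebra.
   Context: A nearly Hom-associative algebra is a triple $(A,\cdot,\alpha)$ with bilinear product $\cdot$ and linear $\alpha:A\to A$ such that $\alpha(x)\cdot(y\cdot z)=(z\cdot x)\cdot\alpha(y)$ for all $x,y,z$. A bimodule of $(A,\cdot,\alpha)$ is a quadruple $(l,r,V,\varphi)$ with $V$ a linear space, $l,r:A\to\mathrm{End}(V)$ linear and $\varphi\in\mathrm{End}(V)$ such that for all $x,y\in A$: $\varphi\circ l(x)=l(\alpha(x))\circ\varphi$, $\varphi\circ r(x)=r(\alpha(x))\circ\varphi$, $l(\alpha(x))\circ l(y)=r(\alpha(y))\circ r(x)$, $l(\alpha(x))\circ r(y)=l(y\cdot x)\circ\varphi$, $r(\alpha(x))\circ l(y)=r(x\cdot y)\circ\varphi$. $(\alpha_A\oplus\alpha_B)(x+a)=\alpha_A(x)+\alpha_B(a)$. *)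

From HB Require Import structures.
From mathcomp Require Import all_boot all_order all_algebra.
Set Implicit Arguments. Unset Strict Implicit. Unset Printing Implicit Defensive.
Import GRing.Theory.
Local Open Scope ring_scope.

Section Defs.
Variable K : fieldType.

Definition is_linear (U V : lmodType K) (f : U -> V) : Prop :=
  forall (k : K) (u v : U), f (k *: u + v) = k *: f u + f v.

Definition is_bilinear (U V W : lmodType K) (f : U -> V -> W) : Prop :=
  (forall v : V, is_linear (fun u => f u v)) /\ (forall u : U, is_linear (f u)).

Definition nearly_hom_assoc (A : lmodType K) (mul : A -> A -> A) (alpha : A -> A)
  : Prop :=
  [/\ is_bilinear mul, is_linear alpha &
      forall x y z : A, mul (alpha x) (mul y z) = mul (mul z x) (alpha y)].

(* (l, r, V, phi) is a bimodule of (A, mul, alpha); l, r : A -> End(V) are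
   linear maps into the linear endomorphisms of V, i.e. bilinear maps
   A -> V -> V, and phi is a linear endomorphism of V. *)
Definition is_bimodule (A V : lmodType K) (mul : A -> A -> A) (alpha : A -> A)
  (l r : A -> V -> V) (phi : V -> V) : Prop :=
  [/\ is_bilinear l, is_bilinear r & is_linear phi] /\
  [/\ forall x v, phi (l x v) = l (alpha x) (phi v),
      forall x v, phi (r x v) = r (alpha x) (phi v),
      forall x y v, l (alpha x) (l y v) = r (alpha y) (r x v),
      forall x y v, l (alpha x) (r y v) = l (mul y x) (phi v) &
      forall x y v, r (alpha x) (l y v) = r (mul x y) (phi v)].

Definition sum_mul (A B : lmodType K) (mulA : A -> A -> A) (mulB : B -> B -> B)
  (lA rA : A -> B -> B) (lB rB : B -> A -> A) (p q : A * B) : A * B :=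
  (mulA p.1 q.1 + lB p.2 q.1 + rB q.2 p.1,
   mulB p.2 q.2 + lA p.1 q.2 + rA q.1 p.2).

Definition sum_map (A B : lmodType K) (alphaA : A -> A) (alphaB : B -> B)
  (p : A * B) : A * B := (alphaA p.1, alphaB p.2).

End Defs.

From HB Require Import structures.
From mathcomp Require Import all_boot all_order all_algebra.
Import GRing.Theory.
Local Open Scope ring_scope.

Set Implicit Arguments.
Unset Strict Implicit.
Unset Printing Implicit Defensive.

(* In the A-component the nine terms on each side
   are matched by nearly Hom-associativity of A, by the last three bimodule
   identities of (lB, rB, A, alphaA) and by the first three compatibility
   conditions; the B-component is the same computation for B (+) A. *)

Lemma subr2_eq (V : zmodType) (x y z : V) : x - y - z = 0 -> x = y + z.
Proof. by move/subr0_eq/eqP; rewrite subr_eq addrC => /eqP. Qed.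

Section Linearity.
Variable K : fieldType.
Implicit Types U V W : lmodType K.

Lemma is_linear_morphD U V (f : U -> V) : is_linear f -> {morph f : u v / u + v}.
Proof. by move=> /GRing.semilinear_linear[]. Qed.

Lemma is_bilinearDl U V W (f : U -> V -> W) :
  is_bilinear f -> forall u u' v, f (u + u') v = f u v + f u' v.
Proof. by case=> fl _ u u' v; rewrite (is_linear_morphD (fl v)). Qed.

Lemma is_bilinearDr U V W (f : U -> V -> W) :
  is_bilinear f -> forall u v v', f u (v + v') = f u v + f u v'.
Proof. by case=> _ fr u v v'; rewrite (is_linear_morphD (fr u)). Qed.

Lemma is_linear_addf U V (f g : U -> V) :
  is_linear f -> is_linear g -> is_linear (fun u => f u + g u).
Proof. by move=> hf hg k u v; rewrite hf hg scalerDr addrACA. Qed.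

Lemma is_linear_pair U V W (f : U -> V) (g : U -> W) :
  is_linear f -> is_linear g -> is_linear (fun u => (f u, g u)).
Proof. by move=> hf hg k u v; rewrite hf hg. Qed.

Lemma is_linear_comp_fst U V W (f : U -> W) :
  is_linear f -> is_linear (fun p : U * V => f p.1).
Proof. by move=> hf k p q; apply: hf. Qed.

Lemma is_linear_comp_snd U V W (f : V -> W) :
  is_linear f -> is_linear (fun p : U * V => f p.2).
Proof. by move=> hf k p q; apply: hf. Qed.

Lemma sum_map_linear U V (alphaU : U -> U) (alphaV : V -> V) :
  is_linear alphaU -> is_linear alphaV -> is_linear (sum_map alphaU alphaV).
Proof.
by move=> hU hV; apply: is_linear_pair;
  [exact: is_linear_comp_fst | exact: is_linear_comp_snd].
Qed.

Lemma sum_mul_bilinear U V (mulU : U -> U -> U) (mulV : V -> V -> V)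
    (lU rU : U -> V -> V) (lV rV : V -> U -> U) :
  is_bilinear mulU -> is_bilinear mulV -> is_bilinear lU -> is_bilinear rU ->
  is_bilinear lV -> is_bilinear rV -> is_bilinear (sum_mul mulU mulV lU rU lV rV).
Proof.
move=> [mU1 mU2] [mV1 mV2] [lU1 lU2] [rU1 rU2] [lV1 lV2] [rV1 rV2].
rewrite /sum_mul; split=> q; apply: is_linear_pair;
  (apply: is_linear_addf; first apply: is_linear_addf).
- exact: (is_linear_comp_fst (mU1 q.1)).
- exact: (is_linear_comp_snd (lV1 q.1)).
- exact: (is_linear_comp_fst (rV2 q.2)).
- exact: (is_linear_comp_snd (mV1 q.2)).
- exact: (is_linear_comp_fst (lU1 q.2)).
- exact: (is_linear_comp_snd (rU2 q.1)).
- exact: (is_linear_comp_fst (mU2 q.1)).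
- exact: (is_linear_comp_fst (lV2 q.2)).
- exact: (is_linear_comp_snd (rV1 q.1)).
- exact: (is_linear_comp_snd (mV2 q.2)).
- exact: (is_linear_comp_snd (lU2 q.1)).
- exact: (is_linear_comp_fst (rU1 q.2)).
Qed.

End Linearity.

Section FirstComponent.
Variables (K : fieldType) (A B : lmodType K).
Variables (mulA : A -> A -> A) (alphaA : A -> A).
Variables (mulB : B -> B -> B) (alphaB : B -> B).
Variables (lA rA : A -> B -> B) (lB rB : B -> A -> A).
Hypothesis homA : nearly_hom_assoc mulA alphaA.
Hypothesis bimodB : is_bimodule mulB alphaB lB rB alphaA.
Hypothesis compat1 : forall (x y : A) (a : B),
  mulA (alphaA x) (rB a y) + rB (lA y a) (alphaA x)
  - mulA (lB a x) (alphaA y) - lB (rA x a) (alphaA y) = 0.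
Hypothesis compat2 : forall (x y : A) (a : B),
  mulA (alphaA x) (lB a y) + rB (rA y a) (alphaA x)
  - rB (alphaB a) (mulA y x) = 0.
Hypothesis compat3 : forall (x y : A) (a : B),
  lB (alphaB a) (mulA x y) - mulA (rB a y) (alphaA x)
  - lB (lA y a) (alphaA x) = 0.

Local Notation mul := (sum_mul mulA mulB lA rA lB rB).
Local Notation alpha := (sum_map alphaA alphaB).

Lemma sum_mul_hom_assoc_fst (p q r : A * B) :
  (mul (alpha p) (mul q r)).1 = (mul (mul r p) (alpha q)).1.
Proof.
case: homA bimodB => mA _ assocA [[lBb rBb _] [_ _ lBlB lBrB rBlB]].
case: p q r => [x a] [y b] [z c]; rewrite /sum_mul /sum_map /=.
rewrite !(is_bilinearDl mA, is_bilinearDr mA, is_bilinearDl lBb,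
          is_bilinearDr lBb, is_bilinearDl rBb, is_bilinearDr rBb).
(* pair up the terms related by compat1 and by compat2 *)
rewrite !addrA [LHS](@GRing.add A).[ACl 1*(3*8)*(2*9)*4*5*6*7].
rewrite assocA (subr2_eq (compat1 _ _ _)) (subr0_eq (compat2 _ _ _)).
rewrite (subr2_eq (compat3 _ _ _)) lBlB lBrB -rBlB.
by rewrite !addrA [LHS](@GRing.add A).[ACl 1*2*5*8*6*3*4*9*7].
Qed.

End FirstComponent.

Theorem mainTheorem13 (K : fieldType) (hK : [pchar K] =i pred0)
  (A B : lmodType K) (mulA : A -> A -> A) (alphaA : A -> A)
  (mulB : B -> B -> B) (alphaB : B -> B)
  (lA rA : A -> B -> B) (lB rB : B -> A -> A) :
  nearly_hom_assoc mulA alphaA ->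
  nearly_hom_assoc mulB alphaB ->
  is_bimodule mulA alphaA lA rA alphaB ->
  is_bimodule mulB alphaB lB rB alphaA ->
  (forall (x y : A) (a : B),
     mulA (alphaA x) (rB a y) + rB (lA y a) (alphaA x)
     - mulA (lB a x) (alphaA y) - lB (rA x a) (alphaA y) = 0) ->
  (forall (x y : A) (a : B),
     mulA (alphaA x) (lB a y) + rB (rA y a) (alphaA x)
     - rB (alphaB a) (mulA y x) = 0) ->
  (forall (x y : A) (a : B),
     lB (alphaB a) (mulA x y) - mulA (rB a y) (alphaA x)
     - lB (lA y a) (alphaA x) = 0) ->
  (forall (x : A) (a b : B),
     mulB (alphaB a) (rA x b) + rA (lB b x) (alphaB a)
     - mulB (lA x a) (alphaB b) - lA (rB a x) (alphaB b) = 0) ->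
  (forall (x : A) (a b : B),
     mulB (alphaB a) (lA x b) + rA (rB b x) (alphaB a)
     - rA (alphaA x) (mulB b a) = 0) ->
  (forall (x : A) (a b : B),
     lA (alphaA x) (mulB b a) - mulB (rA x a) (alphaB b)
     - lA (lB a x) (alphaB b) = 0) ->
  nearly_hom_assoc (sum_mul mulA mulB lA rA lB rB) (sum_map alphaA alphaB).
Proof.
move=> homA homB bimodA bimodB cA1 cA2 cA3 cB1 cB2 cB3.
have [[mA linA _] [mB linB _]] := (homA, homB).
have [[[lAb rAb _] _] [[lBb rBb _] _]] := (bimodA, bimodB).
split; [exact: sum_mul_bilinear | exact: sum_map_linear |].
move=> p q r; apply: injective_projections; first exact: sum_mul_hom_assoc_fst.
(* The B-component is, definitionally, the A-component of the same identity
   for B (+) A at the swapped points. *)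
exact (sum_mul_hom_assoc_fst homB bimodA (fun a b x => cB1 x a b)
  (fun a b x => cB2 x a b) (fun b a x => cB3 x a b) (p.2, p.1) (q.2, q.1) (r.2, r.1)).
Qed.
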